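(* Let $P\in\mathbb{C}[z_1,\dots,z_d]$ be a polynomial of total degree $k\ge1$. Then \[ \lim_{s\to\infty}\sqrt[s]{\|P^s\|_a}=\infty . \]
   Context: For multi-indices $\alpha\in\mathbb{N}^d$ write $z^\alpha=z_1^{\alpha_1}\cdots z_d^{\alpha_d}$ and $\alpha!=\alpha_1!\cdots\alpha_d!$. The apolar inner product on $\mathbb{C}[z_1,\dots,z_d]$ is $\langle \sum c_\alpha z^\alpha,\sum d_\alpha z^\alpha\rangle_a=\sum_\alpha\alpha!\,c_\alpha\overline{d_\alpha}$, with norm $\|P\|_a=\sqrt{\langle P,P\rangle_a}$. The total degree is the largest $|\alpha|=\alpha_1+\cdots+\alpha_d$ with nonzero coefficient. *)

From HB Require Import structures.
From mathcomp Require Import all_boot all_order all_algebra.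
From mathcomp Require Import complex.
From mathcomp Require Import mpoly.

Set Implicit Arguments.
Unset Strict Implicit.
Unset Printing Implicit Defensive.

Import Order.TTheory GRing.Theory Num.Theory.
Local Open Scope ring_scope.

Notation cpoly R d := (@mpoly.mpoly d (complex R)).

Definition mfact (d : nat) (m : 'X_{1..d}) : nat := (\prod_(i < d) (m i)`!)%N.

Definition abs2 (R : nzRingType) (z : complex R) : R := complex.Re z ^+ 2 + complex.Im z ^+ 2.

Definition apolar_norm (R : rcfType) (d : nat) (P : cpoly R d) : R :=
  Num.sqrt (\sum_(m <- msupp P) (mfact m)%:R * abs2 (P@_m)).

(* total degree: largest |alpha| with nonzero coefficient
   (msize P = 1 + total degree, and msize 0 = 0) *)
Definition total_degree (d : nat) (R : nzRingType) (P : {mpoly R[d]}) : nat :=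
  (msize P).-1.

(* The leading monomial of P^s (for the graded order of mpoly) is s alpha with
   coefficient c^s, where alpha is the leading monomial of P and c its
   coefficient.  Hence ||P^s||_a^2 >= (s alpha)! |c|^(2s) >= s! |c|^(2s), and
   since (s!)^2 >= s^s, the s-th root of ||P^s||_a grows at least like
   s^(1/4) |c|. *)
From HB Require Import structures.
From mathcomp Require Import all_boot all_order all_algebra.
From mathcomp Require Import complex.
From mathcomp Require Import mpoly.
From mathcomp Require Import all_classical all_reals all_analysis.
From mathcomp Require Import zify ring.

Set Implicit Arguments.
Unset Strict Implicit.
Unset Printing Implicit Defensive.

Import Order.TTheory GRing.Theory Num.Theory.
Import numFieldNormedType.Exports.
Local Open Scope classical_set_scope.
Local Open Scope ring_scope.

(* Pair the factor i+1 of s! with the factor s-i of the reversed product. *)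
Lemma expnn_le_fact_sqr (s : nat) : (s ^ s <= s`! * s`!)%N.
Proof.
have fact_up : s`! = (\prod_(i < s) i.+1)%N.
  by rewrite fact_prod big_add1 /= big_mkord.
have fact_down : s`! = (\prod_(i < s) (s - i))%N.
  rewrite fact_up (reindex_inj rev_ord_inj) /=; apply: eq_bigr => i _.
  by rewrite /= subnSK.
rewrite {1}fact_up fact_down -big_split /=.
apply: (@leq_trans (\prod_(i < s) s)%N); first by rewrite prod_nat_const card_ord.
apply: leq_prod => i _; have := ltn_ord i; set j := nat_of_ord i => lt_js.
have [t ->] : exists t, s = (j + t.+1)%N by exists (s - j.+1)%N; lia.
rewrite addKn; nia.
Qed.

Lemma expr_le_fact (R : realFieldType) (B : R) (s : nat) :
  0 <= B -> B ^+ 2 <= s%:R -> B ^+ s <= (s`!)%:R.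
Proof.
move=> B0 sB; rewrite -ler_sqr ?nnegrE ?exprn_ge0 ?ler0n //.
rewrite -exprM mulnC exprM.
apply: (le_trans (lerXn2r _ _ _ sB)); rewrite ?nnegrE ?sqr_ge0 ?ler0n //.
by rewrite -natrX expr2 -natrM ler_nat expnn_le_fact_sqr.
Qed.

Lemma ler_powR_inv (R : realType) (M x : R) (s : nat) :
  (0 < s)%N -> 0 <= M -> M ^+ s <= x -> M <= x `^ s%:R^-1.
Proof.
move=> s0 M0 Msx.
have -> : M = (M ^+ s) `^ s%:R^-1.
  by rewrite -powR_mulrn // -powRrM mulfV ?pnatr_eq0 -?lt0n // powRr1.
apply: ge0_ler_powR => //; rewrite ?nnegrE ?invr_ge0 ?ler0n ?exprn_ge0 //.
exact: le_trans (exprn_ge0 _ M0) Msx.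
Qed.

Lemma fact_lb_powR_cvgy (R : realType) (c : R) (u : nat -> R) :
  0 < c -> (forall s, 0 <= u s) -> (forall s, (s`!)%:R * c ^+ s <= u s ^+ 2) ->
  (fun s : nat => powR (u s) s%:R^-1) @ \oo --> +oo.
Proof.
move=> c0 u0 u_lb; apply/cvgryPge => A.
set M := Num.max A 1.
have M1 : 1 <= M by rewrite le_max lexx orbT.
have M0 : 0 <= M by apply: le_trans M1.
(* B ^+ s * c ^+ s = M ^+ (2 s), and B ^+ s <= s`! as soon as s >= B ^+ 2. *)
set B := M ^+ 2 / c.
have B0 : 0 <= B by apply: divr_ge0; [exact: sqr_ge0 | exact: ltW].
exists (Num.truncn (B ^+ 2)).+1 => // s /= lt_s.
have sB : B ^+ 2 <= s%:R.
  by apply/ltW/(lt_le_trans (truncnS_gt _)); rewrite ler_nat.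
have Msu : M ^+ s <= u s.
  rewrite -ler_sqr ?nnegrE ?exprn_ge0 //; apply: le_trans _ (u_lb s).
  have -> : (M ^+ s) ^+ 2 = B ^+ s * c ^+ s.
    by rewrite -exprMn /B divfK ?gt_eqF // -!exprM mulnC.
  by apply: ler_wpM2r; [rewrite exprn_ge0 ?ltW | exact: expr_le_fact].
apply: (@le_trans _ _ M); first by rewrite le_max lexx.
by apply: ler_powR_inv Msu => //; lia.
Qed.

Lemma abs2_ge0 (R : rcfType) (x : complex R) : 0 <= abs2 x.
Proof. by rewrite /abs2 addr_ge0 ?sqr_ge0. Qed.

Lemma abs2_gt0 (R : rcfType) (x : complex R) : x != 0 -> 0 < abs2 x.
Proof.
case: x => a b x0; rewrite /abs2 /=.
rewrite lt0r addr_ge0 ?sqr_ge0 // andbT paddr_eq0 ?sqr_ge0 // !sqrf_eq0.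
by apply: contra x0 => /andP[/eqP-> /eqP->].
Qed.

Lemma abs2M (R : rcfType) (x y : complex R) : abs2 (x * y) = abs2 x * abs2 y.
Proof. by case: x => a b; case: y => c e; rewrite /abs2 /=; ring. Qed.

Lemma abs2X (R : rcfType) (x : complex R) (n : nat) : abs2 (x ^+ n) = abs2 x ^+ n.
Proof.
elim: n => [|n IH]; first by rewrite /abs2 /= expr0n /=; ring.
by rewrite !exprS abs2M IH.
Qed.

Lemma fact_le_mfact_mulmn (d : nat) (m : 'X_{1..d}) (s : nat) :
  (0 < mdeg m)%N -> (s`! <= mfact (m *+ s)%MM)%N.
Proof.
move=> m0.
have [i mi0] : exists i, (0 < m i)%N.
  case: (pickP (fun i => 0 < m i)%N) => [i mi0|m_eq0]; first by exists i.
  move: m0; rewrite mdegE big1 // => i _; have := m_eq0 i; rewrite /=; lia.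
rewrite /mfact (bigD1 i) //= mulmnE.
apply: (@leq_trans (m i * s)`!); first by apply: leq_fact; nia.
by apply: leq_pmulr; rewrite prodn_gt0 // => j; rewrite fact_gt0.
Qed.

Lemma apolar_norm_ge0 (R : rcfType) (d : nat) (P : cpoly R d) : 0 <= apolar_norm P.
Proof. exact: sqrtr_ge0. Qed.

Lemma apolar_norm_sqr_ge_coef (R : rcfType) (d : nat) (P : cpoly R d) (m : 'X_{1..d}) :
  m \in msupp P -> (mfact m)%:R * abs2 P@_m <= apolar_norm P ^+ 2.
Proof.
have term_ge0 m' : 0 <= (mfact m')%:R * abs2 P@_m' by rewrite mulr_ge0 ?abs2_ge0.
move=> mP; rewrite /apolar_norm sqr_sqrtr; last exact: sumr_ge0.
rewrite (bigD1_seq m) ?msupp_uniq //=; apply: ler_wpDr => //; exact: sumr_ge0.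
Qed.

Lemma apolar_norm_exp_lb (R : rcfType) (d : nat) (P : cpoly R d) (s : nat) :
  P != 0 -> (0 < mdeg (mlead P))%N ->
  (s`!)%:R * abs2 (mleadc P) ^+ s <= apolar_norm (P ^+ s) ^+ 2.
Proof.
move=> P0 degP.
have Ps0 : P ^+ s != 0 by rewrite expf_neq0.
apply: le_trans _ (apolar_norm_sqr_ge_coef (mlead_supp Ps0)).
rewrite mleadX // mleadcX abs2X; apply: ler_wpM2r; first by rewrite exprn_ge0 ?abs2_ge0.
by rewrite ler_nat fact_le_mfact_mulmn.
Qed.

Theorem theorem5p2 (R : realType) (d k : nat) (P : cpoly R d) :
  (1 <= k)%N -> total_degree P = k ->
  (fun s : nat => powR (apolar_norm (P ^+ s)) (s%:R^-1)) @ \oo --> +oo.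
Proof.
rewrite /total_degree => k_ge1 degP.
have P0 : P != 0 by apply: contraTneq k_ge1 => P_eq0; rewrite -degP P_eq0 msize0.
have lead_deg : (0 < mdeg (mlead P))%N by move: (mlead_deg P0); lia.
apply: (@fact_lb_powR_cvgy _ (abs2 (mleadc P))).
- by rewrite abs2_gt0 // mleadc_eq0.
- by move=> s; exact: apolar_norm_ge0.
- by move=> s; exact: apolar_norm_exp_lb.
Qed.
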